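(* Let $N=10$ and $f(u)=e^{g(u)}$ where $g\in C^3[0,\infty)$ satisfies $g'>0$, $g''>0$, $g'^2-g''\ge0$, $2g''^2-g'g'''>0$ on $[0,\infty)$. Let $v(r)=F^{-1}\big[\frac{r^2}{16}e^{-x(t)}\big]$, $t=-\log r$, for $0<r\le R$, with $x$, $t_0$, $R$ as in the context. Then $v''+\frac{N-1}{r}v'+f(v)\ge0$ for $0<r\le R$.
   Context: Let $F(u)=\int_u^\infty\frac{ds}{f(s)}$, $\eta(y)=F^{-1}(e^{-y})$ and $h(y)=1-f'(\eta(y))F(\eta(y))$ for $y\ge-\log F(0)$. Under the hypotheses, $h(y)\to0$ as $y\to\infty$ and $h'<0$, and there exist $t_0\in\mathbb{R}$ and a $C^2$ function $x:[t_0,\infty)\to\mathbb{R}$ such that $4(e^{x(t)}-1)=h(x(t)+2t+\log16)$ for all $t\ge t_0$, $x(t_0)+2t_0+\log16=-\log F(0)$, $|x(t)|\le1$ for all large $t$, and $\xi(t):=x(t)+2t+\log16$ is strictly increasing; for each $t$ the value $x(t)$ is the unique solution of the implicit equation with $x+2t+\log 16\ge -\log F(0)$. Set $R=e^{-t_0}$; then $v=\eta(\xi(t))$ is defined on $(0,R]$ with $v(R)=0$. *)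

From Stdlib Require Import Reals.
From Coquelicot Require Import Coquelicot.
Open Scope R_scope.

(* Derivative of f at x relative to the set D (one-sided at endpoints of
   an interval): limit of the difference quotient as y -> x, y in D, y <> x. *)
Definition derive_within (D : R -> Prop) (f : R -> R) (x l : R) : Prop :=
  filterlim (fun y => (f y - f x) / (y - x))
    (within (fun y => D y /\ y <> x) (locally x)) (locally l).

Definition deriv_on (D : R -> Prop) (f f' : R -> R) : Prop :=
  forall x, D x -> derive_within D f x (f' x).

Definition contin_on (D : R -> Prop) (f : R -> R) : Prop :=
  forall x, D x -> filterlim f (within D (locally x)) (locally (f x)).

Definition fexp (g : R -> R) (u : R) : R := exp (g u).

Definition Fint (g : R -> R) (u : R) : R :=
  RInt_gen (fun s => / fexp g s) (at_point u) (Rbar_locally p_infty).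

(* Write [W = f(v) F(v)], [s = g'(v) W], [q = g''(v) W^2] and [z = g'''(v) W^3].
   Comparing [F] with [1 / (f g')] and [g' / (f (g'^2 + g''))], whose derivatives
   are controlled by [g'' > 0] and [2 g''^2 - g' g''' > 0], gives [s <= 1] and
   [s <= s^2 + q]; the remaining hypotheses give [q <= s^2] and [s z <= 2 q^2].
   Since [F(v) = r^2/16 e^(-x)], the defining identity of [x] reads
   [4 (e^x - 1) = 1 - s], and [W], [s], [q] satisfy first-order equations in [r].
   Differentiating the identity twice expresses [x'] and [x''] (in [t = -log r])
   through [s, q, z], while
     [v'' + 9 v' / r + f(v) = W / r^2 (x'' - (1 - s) (2 + x')^2 - 8 (2 + x') + 16 e^x)].
   On the region cut out by the inequalities above this is a rational function of
   [(s, q, z)] whose sign reduces to a polynomial inequality. *)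

From Stdlib Require Import Reals Lra ClassicalEpsilon.
From Coquelicot Require Import Coquelicot.
Open Scope R_scope.

Lemma locally_Rabs (x : R) (S : R -> Prop) :
  locally x S <-> exists d, 0 < d /\ forall y, Rabs (y - x) < d -> S y.
Proof.
  split.
  - intros [e He]. exists e. split; [apply cond_pos | exact He].
  - intros [d [Hd H]]. exists (mkposreal d Hd). exact H.
Qed.

Lemma within_locally_Rabs (D : R -> Prop) (x : R) (P : R -> Prop) :
  within D (locally x) P <->
  exists d, 0 < d /\ forall y, D y -> Rabs (y - x) < d -> P y.
Proof. unfold within. rewrite locally_Rabs. firstorder. Qed.

Lemma within_self (D : R -> Prop) (x : R) : within D (locally x) D.
Proof. exact (filter_forall _ (fun y Dy => Dy)). Qed.

Lemma filterlim_Rabs {T} (F : (T -> Prop) -> Prop) {FF : Filter F} (f : T -> R) (l : R) :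
  filterlim f F (locally l) <-> forall e, 0 < e -> F (fun y => Rabs (f y - l) < e).
Proof.
  split.
  - intros H e He. apply (H (fun z => Rabs (z - l) < e)), locally_Rabs. exists e. auto.
  - intros H P HP. apply locally_Rabs in HP as [d [Hd HP]].
    exact (filter_imp _ _ (fun y Hy => HP (f y) Hy) (H d Hd)).
Qed.

Section RealFilterlim.

Context {T : Type} {F : (T -> Prop) -> Prop} {FF : Filter F}.

Lemma filterlim_Rplus (a b : T -> R) (la lb : R) :
  filterlim a F (locally la) -> filterlim b F (locally lb) ->
  filterlim (fun y => a y + b y) F (locally (la + lb)).
Proof. intros Ha Hb. eapply filterlim_comp_2; eauto. apply (filterlim_plus la lb). Qed.

Lemma filterlim_Rmult (a b : T -> R) (la lb : R) :
  filterlim a F (locally la) -> filterlim b F (locally lb) ->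
  filterlim (fun y => a y * b y) F (locally (la * lb)).
Proof. intros Ha Hb. eapply filterlim_comp_2; eauto. apply (filterlim_mult la lb). Qed.

Lemma filterlim_Rinv (a : T -> R) (la : R) :
  filterlim a F (locally la) -> la <> 0 ->
  filterlim (fun y => / a y) F (locally (/ la)).
Proof. intros Ha Hla. eapply filterlim_comp; [exact Ha | apply continuous_Rinv; auto]. Qed.

Lemma filterlim_within_intro (a : T -> R) (E : R -> Prop) (c : R) :
  filterlim a F (locally c) -> F (fun y => E (a y)) ->
  filterlim a F (within E (locally c)).
Proof.
  intros Ha HE P HP. apply Ha in HP.
  apply (filter_imp _ _ (fun y Hy => proj1 Hy (proj2 Hy)) (filter_and _ _ HP HE)).
Qed.

End RealFilterlim.

Lemma continuous_nonexpansive (h : R -> R) (z : R) :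
  (forall y, Rabs (h y - h z) <= Rabs (y - z)) -> continuous h z.
Proof.
  intros Hh. apply filterlim_Rabs; [apply locally_filter|]. intros e He.
  apply locally_Rabs. exists e. split; [exact He|]. intros y Hy.
  eapply Rle_lt_trans; [apply Hh | exact Hy].
Qed.

Lemma filterlim_within_id (D : R -> Prop) (x : R) :
  filterlim (fun y => y) (within D (locally x)) (locally x).
Proof. intros P HP. exact (filter_imp P _ (fun y Py _ => Py) HP). Qed.

(* Caratheodory's form of differentiability relative to D: a slope Q, continuous
   at x relative to D, with f y - f x = Q y * (y - x) on D.  Unlike difference
   quotients, slopes compose, which gives the chain and inverse-function rules
   below without any non-degeneracy condition. *)
Definition is_cderive (D : R -> Prop) (f : R -> R) (x l : R) : Prop :=
  exists Q : R -> R, Q x = l /\ (forall y, D y -> f y - f x = Q y * (y - x)) /\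
    filterlim Q (within D (locally x)) (locally l).

Lemma derive_within_is_cderive D f x l : derive_within D f x l <-> is_cderive D f x l.
Proof.
  split.
  - intros H.
    exists (fun y => if Req_EM_T y x then l else (f y - f x) / (y - x)).
    split; [|split].
    + destruct (Req_EM_T x x); congruence.
    + intros y _. destruct (Req_EM_T y x) as [->|n]; [ring | field; lra].
    + intros P HP. specialize (H P HP). unfold filtermap, within in *.
      apply filter_imp with (2 := H). intros y Hy Dy.
      destruct (Req_EM_T y x); [now apply locally_singleton | auto].
  - intros [Q [HQx [HQ Hl]]] P HP.
    specialize (Hl P HP). unfold filtermap, within in *.
    apply filter_imp with (2 := Hl). intros y Hy [Dy ny].
    rewrite HQ by exact Dy.
    replace (Q y * (y - x) / (y - x)) with (Q y) by (field; lra). auto.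
Qed.

Lemma is_cderive_continuous D f x l :
  is_cderive D f x l -> filterlim f (within D (locally x)) (locally (f x)).
Proof.
  intros [Q [HQx [HQ Hl]]].
  apply filterlim_within_ext with (fun y => f x + Q y * (y - x)).
  { intros y Dy. rewrite <- HQ by exact Dy. ring. }
  replace (locally (f x)) with (locally (f x + l * (x - x))) by (f_equal; ring).
  apply filterlim_Rplus; [apply filterlim_const|].
  apply filterlim_Rmult; [exact Hl|].
  apply filterlim_Rplus; [apply filterlim_within_id | apply filterlim_const].
Qed.

Lemma is_cderive_ext D f g x l :
  (forall y, D y -> f y = g y) -> D x -> is_cderive D f x l -> is_cderive D g x l.
Proof.
  intros Hfg Dx [Q [HQx [HQ Hl]]]. exists Q. repeat split; auto.
  intros y Dy. rewrite <- !Hfg by assumption. auto.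
Qed.

Lemma is_cderive_subset D D' f x l :
  (forall y, D' y -> D y) -> is_cderive D f x l -> is_cderive D' f x l.
Proof.
  intros HD [Q [HQx [HQ Hl]]]. exists Q. repeat split; auto.
  intros P HP. specialize (Hl P HP). unfold filtermap, within in *.
  apply filter_imp with (2 := Hl). auto.
Qed.

Lemma is_cderive_const D c x : is_cderive D (fun _ => c) x 0.
Proof.
  exists (fun _ => 0). repeat split. intros; ring. apply filterlim_const.
Qed.

Lemma is_cderive_id D x : is_cderive D (fun y => y) x 1.
Proof.
  exists (fun _ => 1). repeat split. intros; ring. apply filterlim_const.
Qed.

Lemma is_cderive_plus D f g x lf lg :
  is_cderive D f x lf -> is_cderive D g x lg ->
  is_cderive D (fun y => f y + g y) x (lf + lg).
Proof.
  intros [Q [HQx [HQ Hl]]] [Q' [HQx' [HQ' Hl']]].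
  exists (fun y => Q y + Q' y). repeat split.
  - congruence.
  - intros y Dy. specialize (HQ y Dy). specialize (HQ' y Dy). lra.
  - apply filterlim_Rplus; auto.
Qed.

Lemma is_cderive_mult D f g x lf lg :
  is_cderive D f x lf -> is_cderive D g x lg ->
  is_cderive D (fun y => f y * g y) x (lf * g x + f x * lg).
Proof.
  intros Hf Hg. pose proof (is_cderive_continuous _ _ _ _ Hf) as Cf.
  destruct Hf as [Q [HQx [HQ Hl]]], Hg as [Q' [HQx' [HQ' Hl']]].
  exists (fun y => Q y * g x + f y * Q' y). repeat split.
  - congruence.
  - intros y Dy.
    replace (f y * g y - f x * g x) with ((f y - f x) * g x + f y * (g y - g x)) by ring.
    rewrite HQ, HQ' by exact Dy. ring.
  - apply filterlim_Rplus; apply filterlim_Rmult; auto. apply filterlim_const.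
Qed.

Lemma is_cderive_comp D E f phi x lf lp :
  (forall y, D y -> E (phi y)) ->
  is_cderive E f (phi x) lf -> is_cderive D phi x lp ->
  is_cderive D (fun y => f (phi y)) x (lf * lp).
Proof.
  intros HDE Hf Hp. pose proof (is_cderive_continuous _ _ _ _ Hp) as Cp.
  destruct Hf as [Q [HQx [HQ Hl]]], Hp as [Q' [HQx' [HQ' Hl']]].
  exists (fun y => Q (phi y) * Q' y). repeat split.
  - congruence.
  - intros y Dy. rewrite HQ, HQ' by auto. ring.
  - apply filterlim_Rmult; auto. eapply filterlim_comp; [|exact Hl].
    apply filterlim_within_intro; auto. exact (filter_forall _ HDE).
Qed.

Lemma is_cderive_of_is_derive D h x l : is_derive h x l -> is_cderive D h x l.
Proof.
  intros H. apply is_derive_Reals in H.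
  apply (is_cderive_subset (fun _ => True)); [auto|].
  apply derive_within_is_cderive.
  apply filterlim_Rabs; [apply within_filter, locally_filter|].
  intros e He. apply within_locally_Rabs.
  destruct (H e He) as [d Hd]. exists d. split; [apply cond_pos|].
  intros y [_ ny] Hy. specialize (Hd (y - x)).
  replace (x + (y - x)) with y in Hd by ring.
  apply Hd; [intros E; apply ny; lra | exact Hy].
Qed.

Lemma is_cderive_comp_is_derive D h f x dh l :
  is_derive h (f x) dh -> is_cderive D f x l ->
  is_cderive D (fun y => h (f y)) x (dh * l).
Proof.
  intros Hh Hf. apply (is_cderive_comp D (fun _ => True)); auto.
  apply is_cderive_of_is_derive, Hh.
Qed.

Lemma is_cderive_opp D f x l :
  is_cderive D f x l -> is_cderive D (fun y => - f y) x (- l).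
Proof.
  intros Hf. replace (- l) with (-1 * l) by ring.
  apply (is_cderive_comp_is_derive D (fun u => - u)); [auto_derive; auto | exact Hf].
Qed.

Lemma is_cderive_exp D f x l :
  is_cderive D f x l -> is_cderive D (fun y => exp (f y)) x (exp (f x) * l).
Proof.
  intros Hf. apply is_cderive_comp_is_derive; [auto_derive; auto; ring | exact Hf].
Qed.

Lemma is_cderive_inv D f x l :
  f x <> 0 -> is_cderive D f x l -> is_cderive D (fun y => / f y) x (- / f x ^ 2 * l).
Proof.
  intros Hfx Hf. apply (is_cderive_comp_is_derive D Rinv); [|exact Hf].
  auto_derive; auto. field; auto.
Qed.

Ltac cderive_rules :=
  repeat first
    [ eassumption
    | apply is_cderive_const
    | apply is_cderive_id
    | apply is_cderive_plus
    | apply is_cderive_mult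
    | apply is_cderive_opp
    | apply is_cderive_exp
    | apply is_cderive_inv ].

Ltac cderive :=
  match goal with |- is_cderive ?D ?f ?x ?l =>
    refine (eq_ind _ (is_cderive D f x) _ l _); [cderive_rules | cbv beta] end.

Lemma is_cderive_unique D f x l1 l2 :
  (forall d, 0 < d -> exists y, D y /\ y <> x /\ Rabs (y - x) < d) ->
  is_cderive D f x l1 -> is_cderive D f x l2 -> l1 = l2.
Proof.
  intros Hacc H1 H2. apply derive_within_is_cderive in H1, H2.
  assert (Hproper : ProperFilter' (within (fun y => D y /\ y <> x) (locally x))).
  { split; [|apply within_filter, locally_filter].
    intros Hempty. apply within_locally_Rabs in Hempty as [d [Hd Hempty]].
    destruct (Hacc d Hd) as [y [Dy [ny Hy]]]. exact (Hempty y (conj Dy ny) Hy). }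
  exact (filterlim_locally_unique _ _ _ H1 H2).
Qed.

Lemma is_derive_of_is_cderive D f x l :
  locally x D -> is_cderive D f x l -> is_derive f x l.
Proof.
  intros HD Hf. apply derive_within_is_cderive in Hf.
  apply is_derive_Reals. intros e He.
  apply locally_Rabs in HD as [r [Hr HD]].
  apply (proj1 (filterlim_Rabs _ _ _) Hf), within_locally_Rabs in He as [d [Hd H]].
  exists (mkposreal (Rmin d r) (Rmin_pos _ _ Hd Hr)). simpl. intros h Hh0 Hh.
  pose proof (Rmin_l d r). pose proof (Rmin_r d r).
  assert (Hxh : x + h - x = h) by ring.
  specialize (H (x + h)). rewrite Hxh in H.
  apply H; [split | lra].
  - apply HD. rewrite Hxh. lra.
  - intros E. apply Hh0. lra.
Qed.

Definition clamp (a b z : R) : R := Rmax a (Rmin b z).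

Lemma clamp_in a b z : a <= b -> a <= clamp a b z <= b.
Proof. intros. unfold clamp, Rmax, Rmin. repeat destruct Rle_dec; lra. Qed.

Lemma clamp_id a b z : a <= z <= b -> clamp a b z = z.
Proof. intros. unfold clamp, Rmax, Rmin. repeat destruct Rle_dec; lra. Qed.

Lemma clamp_continuous a b z : a <= b ->
  filterlim (clamp a b) (locally z) (within (fun w => a <= w <= b) (locally (clamp a b z))).
Proof.
  intros Hab. apply filterlim_within_intro.
  - apply continuous_nonexpansive. intros y. unfold clamp, Rmax, Rmin.
    repeat destruct Rle_dec; unfold Rabs; repeat destruct Rcase_abs; lra.
  - apply filter_forall. intros y. apply clamp_in, Hab.
Qed.

Lemma locally_interval a b y : a < y < b -> locally y (fun z => a <= z <= b).
Proof.
  intros Hy. apply locally_Rabs. exists (Rmin (y - a) (b - y)).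
  split; [apply Rmin_pos; lra|]. intros z Hz.
  pose proof (Rmin_l (y - a) (b - y)). pose proof (Rmin_r (y - a) (b - y)).
  revert Hz. unfold Rabs. destruct Rcase_abs; lra.
Qed.

(* [MVT_gen] is applied to [f] composed with the clamp onto [a, b], which agrees
   with [f] inside and is continuous up to the endpoints. *)
Lemma le_of_is_cderive_nonneg a b f : a <= b ->
  (forall y, a <= y <= b ->
     exists l, is_cderive (fun z => a <= z <= b) f y l /\ 0 <= l) ->
  f a <= f b.
Proof.
  intros Hab H. destruct (Req_dec a b) as [<-|Hne]; [lra|].
  destruct (choice (fun y l =>
      a <= y <= b -> is_cderive (fun z => a <= z <= b) f y l /\ 0 <= l)) as [d Hd].
  { intros y. destruct (excluded_middle_informative (a <= y <= b)) as [Hy|Hy].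
    - destruct (H y Hy) as [l Hl]. exists l. auto.
    - exists 0. tauto. }
  destruct (MVT_gen (fun z => f (clamp a b z)) a b d) as [c [Hc Hmvt]];
    rewrite ?Rmin_left, ?Rmax_right in * by lra.
  - intros y Hy. apply (is_derive_ext_loc f).
    + apply (filter_imp (fun z => a <= z <= b)); [|now apply locally_interval].
      intros z Hz. now rewrite clamp_id.
    + apply (is_derive_of_is_cderive (fun z => a <= z <= b));
        [now apply locally_interval | apply Hd; lra].
  - intros y Hy. apply continuity_pt_filterlim.
    eapply filterlim_comp; [apply clamp_continuous; lra|].
    rewrite clamp_id by exact Hy. apply (is_cderive_continuous _ _ _ (d y)), Hd, Hy.
  - rewrite !clamp_id in Hmvt by lra. destruct (Hd c Hc). nra.
Qed.

Lemma ge_of_is_cderive_nonpos a b f : a <= b ->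
  (forall y, a <= y <= b ->
     exists l, is_cderive (fun z => a <= z <= b) f y l /\ l <= 0) ->
  f b <= f a.
Proof.
  intros Hab H. cut (- f a <= - f b); [lra|].
  apply (le_of_is_cderive_nonneg a b (fun y => - f y) Hab).
  intros y Hy. destruct (H y Hy) as [l [Hl Hl0]].
  exists (- l). split; [apply is_cderive_opp, Hl | lra].
Qed.

Lemma is_cderive_restrict h h' a b y :
  deriv_on (fun u => 0 <= u) h h' -> 0 <= a -> a <= y <= b ->
  is_cderive (fun z => a <= z <= b) h y (h' y).
Proof.
  intros Hh Ha Hy. apply (is_cderive_subset (fun u => 0 <= u)); [intros; lra|].
  apply derive_within_is_cderive, Hh. lra.
Qed.

Lemma is_derive_RInt_continuous (k : R -> R) (a M : R) :
  (forall z, continuous k z) -> is_derive (fun M => RInt k a M) M (k M).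
Proof.
  intros Hk. apply (is_derive_RInt _ _ a); [|apply Hk].
  apply filter_forall. intros b. apply (RInt_correct (V := R_CompleteNormedModule)).
  apply ex_RInt_continuous. auto.
Qed.

Lemma RInt_add_le_of_is_cderive (k h h' : R -> R) (u M : R) :
  (forall z, continuous k z) -> u <= M ->
  (forall y, u <= y <= M -> is_cderive (fun z => u <= z <= M) h y (h' y)) ->
  (forall y, u <= y <= M -> k y + h' y <= 0) ->
  RInt k u M + h M <= h u.
Proof.
  intros Hk HuM Hh Hneg.
  replace (h u) with (RInt k u u + h u) by (rewrite RInt_point; apply Rplus_0_l).
  apply (ge_of_is_cderive_nonpos u M (fun y => RInt k u y + h y) HuM).
  intros y Hy. exists (k y + h' y). split; [|auto].
  apply is_cderive_plus; [apply is_cderive_of_is_derive, is_derive_RInt_continuous |]; auto.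
Qed.

Lemma RInt_add_ge_of_is_cderive (k h h' : R -> R) (u M : R) :
  (forall z, continuous k z) -> u <= M ->
  (forall y, u <= y <= M -> is_cderive (fun z => u <= z <= M) h y (h' y)) ->
  (forall y, u <= y <= M -> 0 <= k y + h' y) ->
  h u <= RInt k u M + h M.
Proof.
  intros Hk HuM Hh Hpos.
  replace (h u) with (RInt k u u + h u) by (rewrite RInt_point; apply Rplus_0_l).
  apply (le_of_is_cderive_nonneg u M (fun y => RInt k u y + h y) HuM).
  intros y Hy. exists (k y + h' y). split; [|auto].
  apply is_cderive_plus; [apply is_cderive_of_is_derive, is_derive_RInt_continuous |]; auto.
Qed.

(* [1 / f] continued to the left of [0] by its value at [0], so that it is
   continuous on all of R as Coquelicot's integration lemmas require. *)
Definition inv_fexp_ext (g : R -> R) (s : R) : R := / fexp g (Rmax 0 s).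

Lemma inv_fexp_ext_eq g s : 0 <= s -> inv_fexp_ext g s = / fexp g s.
Proof. intros Hs. unfold inv_fexp_ext. now rewrite Rmax_right. Qed.

Lemma continuous_inv_fexp_ext g :
  contin_on (fun u => 0 <= u) g -> forall z, continuous (inv_fexp_ext g) z.
Proof.
  intros Hgc z. apply continuous_Rinv_comp; [|apply Rgt_not_eq, exp_pos].
  apply (continuous_comp (fun y => g (Rmax 0 y)) exp); [|apply continuous_exp].
  eapply filterlim_comp; [|apply Hgc, Rmax_l].
  apply filterlim_within_intro; [|apply filter_forall, Rmax_l].
  apply continuous_nonexpansive. intros y. unfold Rmax.
  repeat destruct Rle_dec; unfold Rabs; repeat destruct Rcase_abs; lra.
Qed.

Lemma nonpos_of_mul_affine_le a b c : 0 < c ->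
  (forall t, 0 <= t -> a * (1 + c * t) <= b) -> a <= 0.
Proof.
  intros Hc H. apply Rnot_lt_le. intros Ha.
  specialize (H ((Rabs b + 1) / (a * c))).
  replace (a * (1 + c * ((Rabs b + 1) / (a * c)))) with (a + Rabs b + 1) in H
    by (field; split; apply Rgt_not_eq; assumption).
  pose proof (Rle_abs b). pose proof (Rabs_pos b).
  assert (0 <= (Rabs b + 1) / (a * c)) by (apply Rle_mult_inv_pos; nra).
  specialize (H ltac:(assumption)). lra.
Qed.

Section Profile.

Variables g g1 g2 g3 : R -> R.
Hypothesis Hgc : contin_on (fun u => 0 <= u) g.
Hypothesis Hg1 : deriv_on (fun u => 0 <= u) g g1.
Hypothesis Hg2 : deriv_on (fun u => 0 <= u) g1 g2.
Hypothesis Hg3 : deriv_on (fun u => 0 <= u) g2 g3.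
Hypothesis Hpos1 : forall u, 0 <= u -> 0 < g1 u.
Hypothesis Hpos2 : forall u, 0 <= u -> 0 < g2 u.
Hypothesis Hq2 : forall u, 0 <= u -> 0 < 2 * g2 u ^ 2 - g1 u * g3 u.

Local Notation k := (inv_fexp_ext g).

Lemma ex_RInt_inv_fexp_ext a b : ex_RInt k a b.
Proof.
  apply (ex_RInt_continuous (V := R_CompleteNormedModule)).
  intros. apply continuous_inv_fexp_ext, Hgc.
Qed.

Lemma RInt_inv_fexp_ext_Chasles a b c : RInt k a c = RInt k a b + RInt k b c.
Proof. symmetry. apply (RInt_Chasles k); apply ex_RInt_inv_fexp_ext. Qed.

Lemma RInt_inv_fexp_ext_pos a b : a < b -> 0 < RInt k a b.
Proof.
  intros Hab. replace 0 with (RInt (fun _ => 0) a b) at 1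
    by (rewrite RInt_const; apply Rmult_0_r).
  apply RInt_lt; auto; intros; [apply continuous_inv_fexp_ext, Hgc | apply continuous_const |].
  unfold inv_fexp_ext, fexp. apply Rinv_0_lt_compat, exp_pos.
Qed.

Lemma RInt_inv_fexp_ext_le u M : 0 <= u <= M -> RInt k u M <= / (fexp g u * g1 u).
Proof.
  intros HuM.
  assert (Hbound : RInt k u M + / (fexp g M * g1 M) <= / (fexp g u * g1 u)).
  { apply (RInt_add_le_of_is_cderive k (fun y => / (fexp g y * g1 y))
      (fun y => - (g1 y * g1 y + g2 y) / (fexp g y * (g1 y * g1 y)))).
    - apply continuous_inv_fexp_ext, Hgc.
    - lra.
    - intros y Hy. pose proof (Hpos1 y ltac:(lra)).
      pose proof (is_cderive_restrict g g1 u M y Hg1 ltac:(lra) Hy).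
      pose proof (is_cderive_restrict g1 g2 u M y Hg2 ltac:(lra) Hy).
      pose proof (exp_pos (g y)). unfold fexp. cderive; [apply Rgt_not_eq; nra | field; lra].
    - intros y Hy. rewrite inv_fexp_ext_eq by lra. unfold fexp.
      pose proof (Hpos1 y ltac:(lra)). pose proof (Hpos2 y ltac:(lra)).
      pose proof (exp_pos (g y)).
      replace (/ exp (g y) + - (g1 y * g1 y + g2 y) / (exp (g y) * (g1 y * g1 y)))
        with (- (g2 y / (exp (g y) * (g1 y * g1 y)))) by (field; lra).
      assert (0 <= g2 y / (exp (g y) * (g1 y * g1 y))); [|lra].
      apply Rle_mult_inv_pos; [lra | apply Rmult_lt_0_compat; nra]. }
  enough (0 < / (fexp g M * g1 M)) by lra.
  apply Rinv_0_lt_compat, Rmult_lt_0_compat; [apply exp_pos | apply Hpos1; lra].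
Qed.

Lemma RInt_inv_fexp_ext_ge u M : 0 <= u <= M ->
  g1 u / (fexp g u * (g1 u * g1 u + g2 u)) <=
  RInt k u M + g1 M / (fexp g M * (g1 M * g1 M + g2 M)).
Proof.
  intros HuM.
  apply (RInt_add_ge_of_is_cderive k (fun y => g1 y / (fexp g y * (g1 y * g1 y + g2 y)))
    (fun y => (2 * g2 y ^ 2 - g1 y * g3 y) / (fexp g y * (g1 y * g1 y + g2 y) ^ 2)
              - / fexp g y)).
  - apply continuous_inv_fexp_ext, Hgc.
  - lra.
  - intros y Hy. pose proof (Hpos1 y ltac:(lra)). pose proof (Hpos2 y ltac:(lra)).
    pose proof (is_cderive_restrict g g1 u M y Hg1 ltac:(lra) Hy).
    pose proof (is_cderive_restrict g1 g2 u M y Hg2 ltac:(lra) Hy).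
    pose proof (is_cderive_restrict g2 g3 u M y Hg3 ltac:(lra) Hy).
    pose proof (exp_pos (g y)). unfold fexp, Rdiv.
    cderive; [apply Rgt_not_eq; nra | field; split; apply Rgt_not_eq; nra].
  - intros y Hy. rewrite inv_fexp_ext_eq by lra.
    pose proof (Hpos1 y ltac:(lra)). pose proof (Hpos2 y ltac:(lra)).
    pose proof (Hq2 y ltac:(lra)). pose proof (exp_pos (g y)). unfold fexp.
    replace (/ exp (g y) + ((2 * g2 y ^ 2 - g1 y * g3 y) /
               (exp (g y) * (g1 y * g1 y + g2 y) ^ 2) - / exp (g y)))
      with ((2 * g2 y ^ 2 - g1 y * g3 y) / (exp (g y) * (g1 y * g1 y + g2 y) ^ 2))
      by ring.
    apply Rle_mult_inv_pos; [lra | apply Rmult_lt_0_compat; [lra | apply pow_lt; nra]].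
Qed.

Lemma Fint_spec u : 0 <= u ->
  is_RInt_gen (fun s => / fexp g s) (at_point u) (Rbar_locally p_infty) (Fint g u) /\
  is_lub (fun z => exists M, u <= M /\ z = RInt k u M) (Fint g u).
Proof.
  intros Hu. set (E := fun z => exists M, u <= M /\ z = RInt k u M).
  destruct (completeness E) as [m [Hub Hleast]].
  { exists (/ (fexp g u * g1 u)). intros z [M [HM ->]]. apply RInt_inv_fexp_ext_le. lra. }
  { exists (RInt k u u), u. split; [lra | reflexivity]. }
  assert (Hmono : forall M M', M <= M' -> RInt k u M <= RInt k u M').
  { intros M M' HM. rewrite (RInt_inv_fexp_ext_Chasles u M M').
    destruct (Req_dec M M') as [<-|]; [rewrite RInt_point; change (zero : R) with 0; lra|].
    pose proof (RInt_inv_fexp_ext_pos M M'). lra. }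
  assert (Happrox : forall d, 0 < d -> exists M0, u <= M0 /\ m - d < RInt k u M0).
  { intros d Hd. destruct (excluded_middle_informative
      (exists M0, u <= M0 /\ m - d < RInt k u M0)) as [|Hno]; [assumption|].
    enough (m <= m - d) by lra. apply Hleast. intros z [M [HM ->]].
    apply Rnot_lt_le. intros Hlt. apply Hno. exists M. auto. }
  assert (Hlim : is_RInt_gen (fun s => / fexp g s) (at_point u) (Rbar_locally p_infty) m).
  { apply (is_RInt_gen_ext k).
    - apply Filter_prod with (fun a => a = u) (fun b => u < b); [reflexivity | exists u; auto |].
      intros a b -> Hb y Hy. simpl in Hy. rewrite Rmin_left in Hy by lra.
      apply inv_fexp_ext_eq. lra.
    - intros P HP. apply locally_Rabs in HP as [d [Hd HP]].
      destruct (Happrox d Hd) as [M0 [HuM0 HM0]].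
      apply Filter_prod with (fun a => a = u) (fun b => M0 < b); [reflexivity | exists M0; auto |].
      intros a b -> Hb. exists (RInt k u b). split.
      + apply (RInt_correct (V := R_CompleteNormedModule)), ex_RInt_inv_fexp_ext.
      + apply HP. assert (RInt k u M0 <= RInt k u b) by (apply Hmono; lra).
        assert (RInt k u b <= m) by (apply Hub; exists b; split; [lra | reflexivity]).
        unfold Rabs. destruct Rcase_abs; lra. }
  unfold Fint. rewrite (is_RInt_gen_unique _ _ Hlim). split; [exact Hlim | split; assumption].
Qed.

Lemma RInt_le_Fint u M : 0 <= u <= M -> RInt k u M <= Fint g u.
Proof.
  intros HuM. apply (proj1 (proj2 (Fint_spec u ltac:(lra)))). exists M. split; [lra | reflexivity].
Qed.

Lemma Fint_le u : 0 <= u -> Fint g u <= / (fexp g u * g1 u).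
Proof.
  intros Hu. apply (proj2 (proj2 (Fint_spec u Hu))).
  intros z [M [HM ->]]. apply RInt_inv_fexp_ext_le. lra.
Qed.

Lemma Fint_Chasles a b : 0 <= a -> 0 <= b -> Fint g a = RInt k a b + Fint g b.
Proof.
  intros Ha Hb.
  assert (Hab : is_RInt (fun s => / fexp g s) a b (RInt k a b)).
  { apply (is_RInt_ext k).
    - intros y [Hy _]. apply inv_fexp_ext_eq.
      eapply Rle_trans; [|left; exact Hy]. apply Rmin_glb; assumption.
    - apply (RInt_correct (V := R_CompleteNormedModule)), ex_RInt_inv_fexp_ext. }
  apply is_RInt_gen_at_point in Hab.
  pose proof (is_RInt_gen_Chasles _ _ _ _ Hab (proj1 (Fint_spec b Hb))) as H.
  unfold Fint at 1. exact (is_RInt_gen_unique _ _ H).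
Qed.

Lemma Fint_decreasing a b : 0 <= a -> a < b -> Fint g b < Fint g a.
Proof.
  intros Ha Hab. rewrite (Fint_Chasles a b) by lra.
  pose proof (RInt_inv_fexp_ext_pos a b Hab). lra.
Qed.

Lemma Fint_pos u : 0 <= u -> 0 < Fint g u.
Proof.
  intros Hu. pose proof (RInt_le_Fint u (u + 1) ltac:(lra)).
  pose proof (RInt_inv_fexp_ext_pos u (u + 1) ltac:(lra)). lra.
Qed.

Lemma is_cderive_Fint u : 0 <= u ->
  is_cderive (fun z => 0 <= z) (Fint g) u (- / fexp g u).
Proof.
  intros Hu. apply (is_cderive_ext _ (fun y => Fint g u - RInt k u y)); [| exact Hu |].
  - intros y Hy. rewrite (Fint_Chasles u y) by assumption. ring.
  - rewrite <- inv_fexp_ext_eq by exact Hu. replace (- k u) with (0 + - k u) by ring.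
    apply is_cderive_plus; [apply is_cderive_const|].
    apply (is_cderive_opp _ (fun y => RInt k u y)), is_cderive_of_is_derive.
    apply is_derive_RInt_continuous, continuous_inv_fexp_ext, Hgc.
Qed.

Lemma g1_le u M : 0 <= u <= M -> g1 u <= g1 M.
Proof.
  intros HuM. apply le_of_is_cderive_nonneg; [lra|]. intros y Hy.
  exists (g2 y). split; [apply is_cderive_restrict; auto; lra | left; apply Hpos2; lra].
Qed.

Lemma g_above_tangent u M : 0 <= u <= M -> g u + g1 u * (M - u) <= g M.
Proof.
  intros HuM. cut (g u - g1 u * u <= g M - g1 u * M); [lra|].
  apply (le_of_is_cderive_nonneg u M (fun y => g y - g1 u * y)); [lra|]. intros y Hy.
  pose proof (is_cderive_restrict g g1 u M y Hg1 ltac:(lra) Hy).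
  pose proof (g1_le u y ltac:(lra)).
  eexists. split; [cderive_rules | lra].
Qed.

Lemma fexp_g1_affine_le u t : 0 <= u -> 0 <= t ->
  fexp g u * g1 u * (1 + g1 u * t) <= fexp g (u + t) * g1 (u + t).
Proof.
  intros Hu Ht. unfold fexp.
  pose proof (Hpos1 u Hu). pose proof (g1_le u (u + t) ltac:(lra)).
  pose proof (exp_pos (g u)). pose proof (Rmult_le_pos _ _ (Rlt_le _ _ H) Ht).
  apply Rle_trans with (exp (g u) * (1 + g1 u * t) * g1 (u + t)).
  { replace (exp (g u) * g1 u * (1 + g1 u * t)) with (exp (g u) * (1 + g1 u * t) * g1 u)
      by ring.
    apply Rmult_le_compat_l; [apply Rmult_le_pos|]; lra. }
  apply Rmult_le_compat_r; [lra|].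
  apply Rle_trans with (exp (g u) * exp (g1 u * t));
    [apply Rmult_le_compat_l; [lra | apply exp_ineq1_le]|].
  rewrite <- exp_plus.
  assert (Htan : g u + g1 u * t <= g (u + t))
    by (pose proof (g_above_tangent u (u + t) ltac:(lra)); lra).
  destruct Htan as [Hlt | ->]; [left; apply exp_increasing, Hlt | lra].
Qed.

(* [F(u)] falls short of the lower comparison function at [u] by at most its
   value at [M = u + t], which is below [1 / (f(M) g'(M))]; the convexity of [g]
   makes this decay like [1 / t]. *)
Lemma Fint_ge u : 0 <= u -> g1 u / (fexp g u * (g1 u * g1 u + g2 u)) <= Fint g u.
Proof.
  intros Hu. assert (Hc : 0 < g1 u) by (apply Hpos1; lra).
  cut (g1 u / (fexp g u * (g1 u * g1 u + g2 u)) - Fint g u <= 0); [lra|].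
  apply (nonpos_of_mul_affine_le _ (/ (fexp g u * g1 u)) (g1 u) Hc). intros t Ht.
  set (M := u + t). assert (HuM : 0 <= u <= M) by (unfold M; lra).
  assert (Hslack : g1 u / (fexp g u * (g1 u * g1 u + g2 u)) - Fint g u
                   <= / (fexp g M * g1 M)).
  { pose proof (RInt_inv_fexp_ext_ge u M HuM). pose proof (RInt_le_Fint u M HuM).
    enough (g1 M / (fexp g M * (g1 M * g1 M + g2 M)) <= / (fexp g M * g1 M)) by lra.
    pose proof (Hpos1 M ltac:(lra)). pose proof (Hpos2 M ltac:(lra)).
    pose proof (exp_pos (g M)). unfold fexp.
    apply Rle_trans with (g1 M / (exp (g M) * (g1 M * g1 M))).
    - apply Rmult_le_compat_l; [lra|].
      apply Rinv_le_contravar; [apply Rmult_lt_0_compat | apply Rmult_le_compat_l]; nra.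
    - right. field. split; apply Rgt_not_eq; lra. }
  pose proof (fexp_g1_affine_le u t Hu Ht) as Hgrowth. fold M in Hgrowth.
  assert (HA : 0 < fexp g u * g1 u) by (apply Rmult_lt_0_compat; [apply exp_pos | exact Hc]).
  assert (Hm : 1 <= 1 + g1 u * t) by (pose proof (Rmult_le_pos _ _ (Rlt_le _ _ Hc) Ht); lra).
  apply Rle_trans with (/ (fexp g M * g1 M) * (1 + g1 u * t)); [apply Rmult_le_compat_r; lra|].
  apply Rle_trans with (/ (fexp g u * g1 u * (1 + g1 u * t)) * (1 + g1 u * t)).
  - apply Rmult_le_compat_r; [lra|]. apply Rinv_le_contravar; [nra | exact Hgrowth].
  - right. field. pose proof (exp_pos (g u)). unfold fexp.
    repeat split; apply Rgt_not_eq; lra.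
Qed.

End Profile.

Section InverseFunction.

Variables (D : R -> Prop) (F phi v : R -> R).
Hypothesis HF : forall a b, 0 <= a -> a < b -> F b < F a.
Hypothesis Hv : forall y, D y -> 0 <= v y /\ F (v y) = phi y.

Lemma lt_of_decreasing_lt a b : 0 <= a -> 0 <= b -> F b < F a -> a < b.
Proof.
  intros Ha Hb Hlt. destruct (Rlt_le_dec a b) as [|[Hba | ->]]; [assumption | |lra].
  pose proof (HF b a Hb Hba). lra.
Qed.

Lemma decreasing_injective a b : 0 <= a -> 0 <= b -> F a = F b -> a = b.
Proof.
  intros Ha Hb Heq. destruct (Rtotal_order a b) as [Hlt | [-> | Hlt]]; [| reflexivity |].
  - pose proof (HF a b Ha Hlt). lra.
  - pose proof (HF b a Hb Hlt). lra.
Qed.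

Lemma decreasing_inverse_modulus u e : 0 <= u -> 0 < e ->
  exists d, 0 < d /\ forall w, 0 <= w -> Rabs (F w - F u) < d -> Rabs (w - u) < e.
Proof.
  intros Hu He. pose proof (HF u (u + e) Hu ltac:(lra)).
  assert (Hup : forall w, 0 <= w -> F w - F u > F (u + e) - F u -> w < u + e).
  { intros w Hw Hgt. apply lt_of_decreasing_lt; lra. }
  destruct (Rlt_le_dec (u - e) 0) as [Hneg | Hnonneg].
  - exists (F u - F (u + e)). split; [lra|]. intros w Hw Hd.
    apply Rabs_def2 in Hd as [_ Hd]. specialize (Hup w Hw ltac:(lra)).
    apply Rabs_def1; lra.
  - pose proof (HF (u - e) u Hnonneg ltac:(lra)).
    exists (Rmin (F u - F (u + e)) (F (u - e) - F u)).
    split; [apply Rmin_pos; lra|]. intros w Hw Hd.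
    pose proof (Rmin_l (F u - F (u + e)) (F (u - e) - F u)).
    pose proof (Rmin_r (F u - F (u + e)) (F (u - e) - F u)).
    apply Rabs_def2 in Hd as [Hd1 Hd2]. specialize (Hup w Hw ltac:(lra)).
    assert (u - e < w) by (apply lt_of_decreasing_lt; lra).
    apply Rabs_def1; lra.
Qed.

Lemma inverse_continuous x : D x ->
  filterlim phi (within D (locally x)) (locally (phi x)) ->
  filterlim v (within D (locally x)) (locally (v x)).
Proof.
  intros Dx Hphi. apply filterlim_Rabs; [apply within_filter, locally_filter|].
  intros e He. destruct (Hv x Dx) as [Hx0 HFx].
  destruct (decreasing_inverse_modulus (v x) e Hx0 He) as [d [Hd Hmod]].
  apply (proj1 (filterlim_Rabs _ _ _) Hphi) in Hd.
  apply filter_imp with (2 := filter_and _ _ Hd (within_self D x)).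
  intros y [Hy Dy]. destruct (Hv y Dy) as [Hy0 HFy].
  apply Hmod; [exact Hy0 | now rewrite HFy, HFx].
Qed.

Lemma inverse_is_cderive x lF lp : D x ->
  is_cderive (fun z => 0 <= z) F (v x) lF -> lF <> 0 -> is_cderive D phi x lp ->
  is_cderive D v x (lp / lF).
Proof.
  intros Dx HdF HlF Hdphi.
  pose proof (inverse_continuous x Dx (is_cderive_continuous _ _ _ _ Hdphi)) as Hcont.
  destruct HdF as [QF [HQFx [HQF HlimF]]], Hdphi as [Qp [HQpx [HQp Hlimp]]].
  destruct (Hv x Dx) as [Hx0 HFx].
  assert (HQF0 : forall u, 0 <= u -> QF u <> 0).
  { intros u Hu HQ0. destruct (Req_dec u (v x)) as [-> | Hne]; [congruence|].
    apply Hne, decreasing_injective; [exact Hu | exact Hx0|].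
    specialize (HQF u Hu). rewrite HQ0, Rmult_0_l in HQF. lra. }
  exists (fun y => Qp y / QF (v y)). repeat split.
  - congruence.
  - intros y Dy. destruct (Hv y Dy) as [Hy0 HFy].
    specialize (HQF (v y) Hy0). rewrite HFy, HFx, HQp in HQF by exact Dy.
    apply (Rmult_eq_reg_l (QF (v y))); [|now apply HQF0].
    rewrite <- HQF. field. now apply HQF0.
  - apply filterlim_Rmult; [exact Hlimp|]. apply filterlim_Rinv; [|exact HlF].
    eapply filterlim_comp; [|exact HlimF].
    apply filterlim_within_intro; [exact Hcont|].
    exact (filter_forall _ (fun y Dy => proj1 (Hv y Dy))).
Qed.

End InverseFunction.

(* In the variables [sg = 2 s - 1] and [mu = q - (s - s^2)] the region is
   [0 <= mu <= sg <= 1], where bounding each monomial of the expansion suffices. *)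
Lemma radial_polynomial_pos s q : 1/2 <= s <= 1 -> s - s * s <= q <= s * s ->
  0 < (-25/2)*q + (175/4)*s + (35/2)*s*q + (5/4)*s*q^2 + (-55)*s^2 + (-37/4)*s^2*q
      + (-1/4)*s^2*q^2 + (127/4)*s^3 + (15/4)*s^3*q + (-43/4)*s^4 + (-1/2)*s^4*q
      + (5/2)*s^5 + (-1/4)*s^6.
Proof.
  intros Hs Hq.
  set (sg := 2 * s - 1). set (mu := q - (s - s * s)).
  assert (H0sg : 0 <= sg <= 1) by (unfold sg; lra).
  assert (H0mu : 0 <= mu) by (unfold mu; lra).
  assert (Hmusg : mu <= sg) by (unfold mu, sg; nra).
  assert (Hq' : q = mu + s - s * s) by (unfold mu; ring).
  assert (Hs' : s = (sg + 1) / 2) by (unfold sg; field).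
  rewrite Hq'. clearbody mu. rewrite Hs'. clearbody sg. clear Hs Hq Hs' Hq'.
  match goal with |- 0 < ?X => replace X with
    (81/8 - 171/32 * mu + 9/16 * (mu*mu) + 171/32 * sg + 181/32 * (sg*mu)
     + 1/2 * (sg*(mu*mu)) - 131/32 * (sg*sg) - 45/32 * (sg*sg*mu)
     - 1/16 * (sg*sg*(mu*mu)) + 21/32 * (sg*sg*sg) + 3/32 * (sg*sg*sg*mu)
     - 1/32 * (sg*sg*sg*sg)) by field end.
  assert (0 <= mu * mu) by nra.
  assert (0 <= sg * mu) by nra.
  assert (0 <= sg * (mu * mu)) by nra.
  assert (sg * sg <= 1) by nra.
  assert (sg * sg * mu <= 1) by nra.
  assert (sg * sg * (mu * mu) <= 1) by nra.
  assert (0 <= sg * sg * sg) by nra.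
  assert (0 <= sg * sg * sg * mu) by nra.
  assert (sg * sg * sg * sg <= 1) by nra.
  lra.
Qed.

(* With [h = s - s^2 - q] and [Dn = 4 e - h > 0], solving the two relations for
   [P1] and [P2] turns the target into [16 C / Dn^3], and [s C] is [q + s^2 - s]
   times the polynomial above plus [4 e^2 (2 q^2 - s z)]. *)
Lemma radial_numerator_nonneg e P1 P2 s q z :
  0 < s -> s <= 1 -> s <= s * s + q -> q <= s * s -> s * z <= 2 * (q * q) ->
  4 * (e - 1) = 1 - s ->
  4 * e * P1 = (2 + P1) * (s - s * s - q) ->
  P2 * (4 * e - (s - s * s - q)) =
    - 4 * e * P1 ^ 2
    - (2 + P1) ^ 2 * ((1 - 2 * s) * (s - s * s - q) + z - 2 * q * (1 - s)) ->
  0 <= P2 - (1 - s) * (2 + P1) ^ 2 - 8 * (2 + P1) + 16 * e.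
Proof.
  intros Hs0 Hs1 Hsq Hq Hz He HP1 HP2.
  replace e with ((5 - s) / 4) in * by lra. clear He.
  set (E := (5 - s) / 4) in *.
  set (h := s - s * s - q) in *.
  set (Dn := 4 * E - h) in *.
  assert (HDn : 0 < Dn) by (unfold Dn, h, E; nra).
  assert (HP1' : P1 = 2 * h / Dn).
  { assert (HP1Dn : P1 * Dn = 2 * h) by (unfold Dn; lra). rewrite <- HP1Dn. field; lra. }
  assert (HP2' : P2 = (- 4 * E * P1 ^ 2
                       - (2 + P1) ^ 2 * ((1 - 2 * s) * h + z - 2 * q * (1 - s))) / Dn).
  { rewrite <- HP2. field; lra. }
  set (C := - 4 * E * E * ((1 - 2 * s) * h + z - 2 * q * (1 - s))
            - E * h * h - h * (4 * E - h) * ((E - 1) * (8 * E - h) + 4 * E - h)).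
  replace (P2 - (1 - s) * (2 + P1) ^ 2 - 8 * (2 + P1) + 16 * E) with (16 * C / Dn ^ 3)
    by (rewrite HP2', HP1'; unfold C, Dn, h, E in *; field; lra).
  assert (HC : 0 <= C).
  { pose proof (radial_polynomial_pos s q ltac:(nra) ltac:(lra)) as HT.
    assert (HsC : s * C = (q + s * s - s) *
      ((-25/2)*q + (175/4)*s + (35/2)*s*q + (5/4)*s*q^2 + (-55)*s^2 + (-37/4)*s^2*q
       + (-1/4)*s^2*q^2 + (127/4)*s^3 + (15/4)*s^3*q + (-43/4)*s^4 + (-1/2)*s^4*q
       + (5/2)*s^5 + (-1/4)*s^6)
      + 4 * E * E * (2 * (q * q) - s * z)) by (unfold C, h, E; field).
    assert (0 <= 4 * E * E * (2 * (q * q) - s * z)) by (apply Rmult_le_pos; [unfold E; nra | lra]).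
    assert (0 <= s * C) by nra.
    nra. }
  apply Rmult_le_pos; [lra|]. left. apply Rinv_0_lt_compat, pow_lt, HDn.
Qed.

Lemma interval_oc_points_near a b r : a < r <= b ->
  forall d, 0 < d -> exists y, a < y <= b /\ y <> r /\ Rabs (y - r) < d.
Proof.
  intros Hr d Hd. exists (r - Rmin d (r - a) / 2).
  pose proof (Rmin_pos d (r - a) Hd ltac:(lra)).
  pose proof (Rmin_l d (r - a)). pose proof (Rmin_r d (r - a)).
  split; [lra|]. split; [lra|]. rewrite Rabs_left; lra.
Qed.

Section Radial.

Variables g g1 g2 g3 : R -> R.
Hypothesis Hgc : contin_on (fun u => 0 <= u) g.
Hypothesis Hg1 : deriv_on (fun u => 0 <= u) g g1.
Hypothesis Hg2 : deriv_on (fun u => 0 <= u) g1 g2.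
Hypothesis Hg3 : deriv_on (fun u => 0 <= u) g2 g3.
Hypothesis Hpos1 : forall u, 0 <= u -> 0 < g1 u.
Hypothesis Hpos2 : forall u, 0 <= u -> 0 < g2 u.
Hypothesis Hq1 : forall u, 0 <= u -> 0 <= g1 u ^ 2 - g2 u.
Hypothesis Hq2 : forall u, 0 <= u -> 0 < 2 * g2 u ^ 2 - g1 u * g3 u.
Variable eta : R -> R.
Hypothesis Heta : forall y, - ln (Fint g 0) <= y ->
  0 <= eta y /\ Fint g (eta y) = exp (- y).
Variables (x x1 x2 : R -> R) (t0 : R).
Hypothesis Hx1 : deriv_on (fun t => t0 <= t) x x1.
Hypothesis Hx2 : deriv_on (fun t => t0 <= t) x1 x2.
Hypothesis Hxeq : forall t, t0 <= t ->
  4 * (exp (x t) - 1) =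
  1 - g1 (eta (x t + 2 * t + ln 16)) * fexp g (eta (x t + 2 * t + ln 16))
      * Fint g (eta (x t + 2 * t + ln 16)).
Hypothesis Hx0 : x t0 + 2 * t0 + ln 16 = - ln (Fint g 0).
Hypothesis Hxi : forall t t', t0 <= t -> t < t' ->
  x t + 2 * t + ln 16 < x t' + 2 * t' + ln 16.
Variable v : R -> R.
Hypothesis Hv : forall r, 0 < r <= exp (- t0) ->
  0 <= v r /\ Fint g (v r) = r ^ 2 / 16 * exp (- x (- ln r)).

Local Notation D := (fun r => 0 < r <= exp (- t0)).

(* At [t = -log r]: [phi = F(v)], [E = e^x], [P1 = x'], [P2 = x''] and
   [W = f(v) F(v)]; [s], [q], [z] are [g'], [g''], [g'''] at [v] scaled by
   [W], [W^2], [W^3]. *)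
Let phi r := r ^ 2 / 16 * exp (- x (- ln r)).
Let E r := exp (x (- ln r)).
Let P1 r := x1 (- ln r).
Let P2 r := x2 (- ln r).
Let W r := fexp g (v r) * phi r.
Let s r := g1 (v r) * W r.
Let q r := g2 (v r) * (W r * W r).
Let z r := g3 (v r) * (W r * W r * W r).

Definition radial_v1 (r : R) : R := - W r * (2 + P1 r) / r.

Definition radial_v2 (r : R) : R :=
  W r / r ^ 2 * (P2 r + (2 + P1 r) - (1 - s r) * (2 + P1 r) ^ 2).

Lemma t0_le_opp_ln r : D r -> t0 <= - ln r.
Proof.
  intros [Hr0 Hr]. apply ln_le in Hr; [|exact Hr0]. rewrite ln_exp in Hr. lra.
Qed.

Lemma is_cderive_comp_opp_ln h h' r : deriv_on (fun t => t0 <= t) h h' -> D r ->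
  is_cderive D (fun r => h (- ln r)) r (- h' (- ln r) / r).
Proof.
  intros Hh Hr. replace (- h' (- ln r) / r) with (h' (- ln r) * (- / r)) by (field; lra).
  apply (is_cderive_comp D (fun t => t0 <= t)); [exact t0_le_opp_ln | |].
  - apply derive_within_is_cderive, Hh, t0_le_opp_ln, Hr.
  - apply is_cderive_of_is_derive. auto_derive; [lra | field; lra].
Qed.

Lemma is_cderive_E r : D r -> is_cderive D E r (- E r * P1 r / r).
Proof.
  intros Hr. pose proof (is_cderive_comp_opp_ln x x1 r Hx1 Hr).
  unfold E. cderive. unfold P1. field. lra.
Qed.

Lemma is_cderive_phi r : D r -> is_cderive D phi r (phi r * (2 + P1 r) / r).
Proof.
  intros Hr. pose proof (is_cderive_comp_opp_ln x x1 r Hx1 Hr).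
  assert (is_cderive D (fun r => r ^ 2 / 16) r (r / 8))
    by (apply is_cderive_of_is_derive; auto_derive; [auto | field]).
  unfold phi. cderive. unfold P1. field. lra.
Qed.

Lemma radial_identity r : D r -> 4 * (E r - 1) = 1 - s r.
Proof.
  intros Hr. pose proof (t0_le_opp_ln r Hr) as Ht.
  set (xi := x (- ln r) + 2 * - ln r + ln 16).
  assert (Hxi0 : - ln (Fint g 0) <= xi).
  { unfold xi. rewrite <- Hx0. destruct (Req_dec (- ln r) t0) as [-> | Hne]; [lra|].
    left. apply Hxi; lra. }
  destruct (Heta xi Hxi0) as [Heta0 HFeta]. destruct (Hv r Hr) as [Hv0 HFv].
  assert (Hphi : exp (- xi) = phi r).
  { unfold xi, phi.
    replace (- (x (- ln r) + 2 * - ln r + ln 16)) with (- x (- ln r) + ln r + ln r - ln 16)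
      by ring.
    unfold Rminus. rewrite !exp_plus, !exp_Ropp, !exp_ln by lra.
    field. apply Rgt_not_eq, exp_pos. }
  assert (Hetav : eta xi = v r).
  { apply (decreasing_injective (Fint g)); [| exact Heta0 | exact Hv0 |].
    - intros a b Ha Hab. eapply Fint_decreasing; eauto.
    - rewrite HFeta, HFv, Hphi. reflexivity. }
  pose proof (Hxeq (- ln r) Ht) as Hid. fold xi in Hid. rewrite Hetav, HFv in Hid.
  unfold E, s, W, phi. rewrite Hid. ring.
Qed.

Lemma is_cderive_v r : D r -> is_cderive D v r (radial_v1 r).
Proof.
  intros Hr. destruct (Hv r Hr) as [Hv0 _]. pose proof (exp_pos (g (v r))).
  replace (radial_v1 r) with ((phi r * (2 + P1 r) / r) / (- / fexp g (v r)))
    by (unfold radial_v1, W, fexp; field; split; apply Rgt_not_eq; lra).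
  apply (inverse_is_cderive D (Fint g) phi v).
  - intros a b Ha Hab. eapply Fint_decreasing; eauto.
  - exact Hv.
  - exact Hr.
  - eapply is_cderive_Fint; eauto.
  - unfold fexp. apply Ropp_neq_0_compat, Rinv_neq_0_compat, Rgt_not_eq, exp_pos.
  - apply is_cderive_phi, Hr.
Qed.

Lemma is_cderive_comp_v h h' r : deriv_on (fun u => 0 <= u) h h' -> D r ->
  is_cderive D (fun r => h (v r)) r (h' (v r) * radial_v1 r).
Proof.
  intros Hh Hr. apply (is_cderive_comp D (fun u => 0 <= u)).
  - intros y Hy. apply Hv, Hy.
  - apply derive_within_is_cderive, Hh, Hv, Hr.
  - apply is_cderive_v, Hr.
Qed.

Lemma is_cderive_W r : D r -> is_cderive D W r (W r * (2 + P1 r) / r * (1 - s r)).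
Proof.
  intros Hr. pose proof (is_cderive_comp_v g g1 r Hg1 Hr).
  pose proof (is_cderive_phi r Hr).
  unfold W at 1, fexp. cderive. unfold radial_v1, s, W, fexp. field. lra.
Qed.

Lemma is_cderive_s r : D r ->
  is_cderive D s r ((2 + P1 r) / r * (s r - s r * s r - q r)).
Proof.
  intros Hr. pose proof (is_cderive_comp_v g1 g2 r Hg2 Hr).
  pose proof (is_cderive_W r Hr).
  unfold s at 1. cderive. unfold radial_v1, s, q. field. lra.
Qed.

Lemma is_cderive_q r : D r ->
  is_cderive D q r ((2 + P1 r) / r * (2 * q r * (1 - s r) - z r)).
Proof.
  intros Hr. pose proof (is_cderive_comp_v g2 g3 r Hg3 Hr).
  pose proof (is_cderive_W r Hr).
  unfold q at 1. cderive. unfold radial_v1, s, q, z. field. lra.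
Qed.

Lemma is_cderive_P1 r : D r -> is_cderive D P1 r (- P2 r / r).
Proof. apply (is_cderive_comp_opp_ln x1 x2 r Hx2). Qed.

Lemma first_relation r : D r -> 4 * E r * P1 r = (2 + P1 r) * (s r - s r * s r - q r).
Proof.
  intros Hr. pose proof (is_cderive_E r Hr). pose proof (is_cderive_s r Hr).
  assert (Hd : 4 * (- E r * P1 r / r) = - ((2 + P1 r) / r * (s r - s r * s r - q r))).
  { apply (is_cderive_unique D (fun r => 4 * (E r - 1)) r).
    - apply interval_oc_points_near, Hr.
    - cderive. ring.
    - apply (is_cderive_ext D (fun r => 1 - s r)); [| exact Hr |].
      + intros y Hy. symmetry. apply radial_identity, Hy.
      + cderive. ring. }
  apply (Rmult_eq_reg_r (/ r)); [lra | apply Rinv_neq_0_compat; lra].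
Qed.

Lemma second_relation r : D r ->
  P2 r * (4 * E r - (s r - s r * s r - q r)) =
  - 4 * E r * P1 r ^ 2
  - (2 + P1 r) ^ 2 * ((1 - 2 * s r) * (s r - s r * s r - q r) + z r - 2 * q r * (1 - s r)).
Proof.
  intros Hr. pose proof (is_cderive_E r Hr). pose proof (is_cderive_P1 r Hr).
  pose proof (is_cderive_s r Hr). pose proof (is_cderive_q r Hr).
  assert (Hd : 4 * (- E r * P1 r / r * P1 r + E r * (- P2 r / r)) =
               - P2 r / r * (s r - s r * s r - q r)
               + (2 + P1 r) * ((1 - 2 * s r) * ((2 + P1 r) / r * (s r - s r * s r - q r))
                               - (2 + P1 r) / r * (2 * q r * (1 - s r) - z r))).
  { apply (is_cderive_unique D (fun r => 4 * E r * P1 r) r).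
    - apply interval_oc_points_near, Hr.
    - cderive. ring.
    - apply (is_cderive_ext D (fun r => (2 + P1 r) * (s r - s r * s r - q r))); [| exact Hr |].
      + intros y Hy. symmetry. apply first_relation, Hy.
      + cderive. ring. }
  apply (Rmult_eq_reg_r (/ r)); [lra | apply Rinv_neq_0_compat; lra].
Qed.

Lemma is_cderive_v1 r : D r -> is_cderive D radial_v1 r (radial_v2 r).
Proof.
  intros Hr. pose proof (is_cderive_W r Hr). pose proof (is_cderive_P1 r Hr).
  unfold radial_v1. cderive; [lra|]. unfold radial_v2. field. lra.
Qed.

Lemma weight_bounds r : D r ->
  0 < W r /\ 0 < s r /\ s r <= 1 /\ s r <= s r * s r + q r /\ q r <= s r * s r /\
  s r * z r <= 2 * (q r * q r).
Proof.
  intros Hr. destruct (Hv r Hr) as [Hv0 HFv]. fold (phi r) in HFv.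
  pose proof (Hpos1 _ Hv0). pose proof (Hpos2 _ Hv0).
  pose proof (Hq1 _ Hv0). pose proof (Hq2 _ Hv0).
  assert (Hf : 0 < fexp g (v r)) by apply exp_pos.
  assert (HW : 0 < W r).
  { unfold W. rewrite <- HFv. apply Rmult_lt_0_compat; [exact Hf|]. eapply Fint_pos; eauto. }
  assert (Hupper : g1 (v r) * W r <= 1).
  { pose proof (Fint_le g g1 g2 Hgc Hg1 Hg2 Hpos1 Hpos2 (v r) Hv0) as Hle.
    rewrite HFv in Hle. unfold W.
    apply (Rmult_le_compat_l (g1 (v r) * fexp g (v r))) in Hle; [|nra].
    replace (g1 (v r) * fexp g (v r) * / (fexp g (v r) * g1 (v r))) with 1 in Hle
      by (field; split; apply Rgt_not_eq; nra).
    lra. }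
  assert (Hlower : g1 (v r) <= (g1 (v r) * g1 (v r) + g2 (v r)) * W r).
  { pose proof (Fint_ge g g1 g2 g3 Hgc Hg1 Hg2 Hg3 Hpos1 Hpos2 Hq2 (v r) Hv0) as Hge.
    rewrite HFv in Hge. unfold W.
    apply (Rmult_le_compat_l (fexp g (v r) * (g1 (v r) * g1 (v r) + g2 (v r)))) in Hge;
      [|nra].
    replace (fexp g (v r) * (g1 (v r) * g1 (v r) + g2 (v r)) *
             (g1 (v r) / (fexp g (v r) * (g1 (v r) * g1 (v r) + g2 (v r)))))
      with (g1 (v r)) in Hge by (field; split; apply Rgt_not_eq; nra).
    lra. }
  unfold s, q, z. repeat split.
  - exact HW.
  - nra.
  - exact Hupper.
  - nra.
  - nra.
  - pose proof (Rmult_lt_0_compat _ _ HW HW) as HW2.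
    pose proof (Rmult_lt_0_compat _ _ HW2 HW2) as HW4.
    assert (0 <= (2 * g2 (v r) ^ 2 - g1 (v r) * g3 (v r)) * (W r * W r * (W r * W r)))
      by (apply Rmult_le_pos; lra).
    nra.
Qed.

Lemma radial_operator_nonneg r : D r ->
  0 <= radial_v2 r + (10 - 1) / r * radial_v1 r + fexp g (v r).
Proof.
  intros Hr. pose proof (weight_bounds r Hr) as (HW & Hs0 & Hs1 & Hsq & Hq & Hz).
  assert (Hf : fexp g (v r) = 16 * E r * W r / r ^ 2).
  { unfold W, phi, E. rewrite exp_Ropp. field.
    split; [apply Rgt_not_eq, exp_pos | lra]. }
  replace (radial_v2 r + (10 - 1) / r * radial_v1 r + fexp g (v r))
    with (W r / r ^ 2 * (P2 r - (1 - s r) * (2 + P1 r) ^ 2 - 8 * (2 + P1 r) + 16 * E r))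
    by (rewrite Hf; unfold radial_v1, radial_v2; field; lra).
  apply Rmult_le_pos; [apply Rle_mult_inv_pos; [lra | apply pow_lt; lra]|].
  apply (radial_numerator_nonneg (E r) (P1 r) (P2 r) (s r) (q r) (z r)); auto.
  - apply radial_identity, Hr.
  - apply first_relation, Hr.
  - apply second_relation, Hr.
Qed.

End Radial.

Theorem lemma3p5
  (g g1 g2 g3 : R -> R)
  (* g in C^3[0,oo) with derivatives g1, g2, g3 *)
  (Hgc : contin_on (fun u => 0 <= u) g)
  (Hg1 : deriv_on (fun u => 0 <= u) g g1)
  (Hg2 : deriv_on (fun u => 0 <= u) g1 g2)
  (Hg3 : deriv_on (fun u => 0 <= u) g2 g3)
  (Hg3c : contin_on (fun u => 0 <= u) g3)
  (Hpos1 : forall u, 0 <= u -> 0 < g1 u)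
  (Hpos2 : forall u, 0 <= u -> 0 < g2 u)
  (Hq1 : forall u, 0 <= u -> 0 <= g1 u ^ 2 - g2 u)
  (Hq2 : forall u, 0 <= u -> 0 < 2 * g2 u ^ 2 - g1 u * g3 u)
  (* eta(y) = F^{-1}(e^{-y}) for y >= -log F(0) *)
  (eta : R -> R)
  (Heta : forall y, - ln (Fint g 0) <= y ->
            0 <= eta y /\ Fint g (eta y) = exp (- y))
  (* the function x and t0 of the context *)
  (x x1 x2 : R -> R) (t0 : R)
  (Hx1 : deriv_on (fun t => t0 <= t) x x1)
  (Hx2 : deriv_on (fun t => t0 <= t) x1 x2)
  (Hx2c : contin_on (fun t => t0 <= t) x2)
  (Hxeq : forall t, t0 <= t ->
     4 * (exp (x t) - 1) =
     1 - g1 (eta (x t + 2 * t + ln 16)) * fexp g (eta (x t + 2 * t + ln 16))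
           * Fint g (eta (x t + 2 * t + ln 16)))
  (Hxuniq : forall t y, t0 <= t -> - ln (Fint g 0) <= y + 2 * t + ln 16 ->
     4 * (exp y - 1) =
     1 - g1 (eta (y + 2 * t + ln 16)) * fexp g (eta (y + 2 * t + ln 16))
           * Fint g (eta (y + 2 * t + ln 16)) -> y = x t)
  (Hx0 : x t0 + 2 * t0 + ln 16 = - ln (Fint g 0))
  (Hxbd : exists T, forall t, T <= t -> Rabs (x t) <= 1)
  (Hxi : forall t s, t0 <= t -> t < s ->
     x t + 2 * t + ln 16 < x s + 2 * s + ln 16)
  (* v(r) = F^{-1}[ r^2/16 e^{-x(t)} ], t = -log r, 0 < r <= R = e^{-t0} *)
  (v : R -> R)
  (Hv : forall r, 0 < r <= exp (- t0) ->
     0 <= v r /\ Fint g (v r) = r ^ 2 / 16 * exp (- x (- ln r))) :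
  exists v1 v2 : R -> R,
    deriv_on (fun r => 0 < r <= exp (- t0)) v v1 /\
    deriv_on (fun r => 0 < r <= exp (- t0)) v1 v2 /\
    forall r, 0 < r <= exp (- t0) ->
      0 <= v2 r + (10 - 1) / r * v1 r + fexp g (v r).
Proof.
  exists (radial_v1 g x x1 v), (radial_v2 g g1 x x1 x2 v). split; [|split].
  - intros r Hr. apply derive_within_is_cderive. eapply is_cderive_v; eauto.
  - intros r Hr. apply derive_within_is_cderive. eapply is_cderive_v1; eauto.
  - intros r Hr. eapply radial_operator_nonneg; eauto.
Qed.
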